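(* Let $I$ be an ideal of a ring $R$. Then $R$ is uniquely weakly $I$-clean if and only if $R/I$ is semi Boolean and idempotents can be lifted uniquely weakly modulo $I$.
   Context: All rings are associative with identity; $Idem(R)$ is the set of idempotents of $R$. $R$ is uniquely weakly $I$-clean if for every $x\in R$ there exists a unique $e\in Idem(R)$ such that $x-e\in I$ or $x+e\in I$. A ring $A$ is semi Boolean if for every $x\in A$, $x^2=x$ or $x^2=-x$. Idempotents can be lifted uniquely weakly modulo $I$ if for every $x\in R$ with $x^2-x\in I$ there exists a unique $e\in Idem(R)$ with $x-e\in I$ or $x+e\in I$. *)

From HB Require Import structures.
From mathcomp Require Import all_boot all_order all_algebra.
Set Implicit Arguments. Unset Strict Implicit. Unset Printing Implicit Defensive.
Import GRing.Theory.
Local Open Scope ring_scope.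

Definition is_idem (R : pzRingType) (e : R) : Prop := e * e = e.

Record two_sided_ideal (R : pzRingType) (I : R -> Prop) : Prop := {
  ideal0 : I 0;
  idealB : forall x y, I x -> I y -> I (x - y);
  idealMl : forall a x, I x -> I (a * x);
  idealMr : forall a x, I x -> I (x * a)
}.

Definition uniquely_weakly_I_clean (R : pzRingType) (I : R -> Prop) : Prop :=
  forall x : R, exists! e : R, is_idem e /\ (I (x - e) \/ I (x + e)).

Definition semi_boolean (A : pzRingType) : Prop :=
  forall x : A, x * x = x \/ x * x = - x.

(* "R/I is semi Boolean", written on representatives: the coset of x
   satisfies (x+I)^2 = x+I or (x+I)^2 = -(x+I), i.e. x^2 - x \in I or
   x^2 + x \in I.  (MathComp only provides quotients by proper ideals of
   commutative rings, so the quotient ring is unfolded on cosets.) *)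
Definition quotient_semi_boolean (R : pzRingType) (I : R -> Prop) : Prop :=
  forall x : R, I (x * x - x) \/ I (x * x + x).

Definition idempotents_lift_uniquely_weakly (R : pzRingType) (I : R -> Prop)
  : Prop :=
  forall x : R, I (x * x - x) ->
    exists! e : R, is_idem e /\ (I (x - e) \/ I (x + e)).

From Pilot Require Import Defs.
From mathcomp Require Import all_boot all_order all_algebra.
Local Open Scope ring_scope.
Import GRing.Theory.
Set Implicit Arguments.
Unset Strict Implicit.

(* If x is congruent to an idempotent e modulo I then
   x^2 - x = x (x - e) + (x - e) e - (x - e) lies in I, and if x is congruent
   to -e then the same applies to -x, giving x^2 + x in I.  Conversely, when
   x^2 - x lies in I the unique weak lift of x is exactly what is wanted, and
   when x^2 + x lies in I one lifts -x instead: since x - e and x + e are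
   the negatives of -x + e and -x - e, x and -x have the same weak lifts. *)

Section IdealFacts.
Variables (R : pzRingType) (I : R -> Prop).
Hypothesis hI : two_sided_ideal I.

Lemma idealN (y : R) : I y -> I (- y).
Proof. by move=> Iy; rewrite -sub0r; apply: (idealB hI) => //; apply: ideal0. Qed.

Lemma idealNE (y : R) : I (- y) <-> I y.
Proof. by split=> [/idealN | /idealN]; rewrite ?opprK. Qed.

Lemma idealD (a b : R) : I a -> I b -> I (a + b).
Proof. by move=> Ia Ib; rewrite -[b]opprK; apply: (idealB hI) => //; apply: idealN. Qed.

Lemma ideal_sqr_sub_congr (x y : R) :
  I (x - y) -> I ((x * x - x) - (y * y - y)).
Proof.
move=> Ixy.
have -> : (x * x - x) - (y * y - y) = (x * (x - y) + (x - y) * y) - (x - y).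
  rewrite mulrBr mulrBl addrA subrK !opprB.
  by rewrite addrACA [RHS]addrACA (addrC (- x)).
by apply: (idealB hI) => //; apply: idealD; [apply: (Defs.idealMl hI) | apply: (Defs.idealMr hI)].
Qed.

Lemma idem_congr_sqr_sub (x e : R) : is_idem e -> I (x - e) -> I (x * x - x).
Proof. by move=> ide /ideal_sqr_sub_congr; rewrite ide subrr subr0. Qed.

Lemma weak_congr_opp (x e : R) :
  I (- x - e) \/ I (- x + e) <-> I (x - e) \/ I (x + e).
Proof.
have [-> ->] : - x - e = - (x + e) /\ - x + e = - (x - e).
  by rewrite opprD opprB [e - x]addrC.
by have := idealNE (x + e); have := idealNE (x - e); tauto.
Qed.

End IdealFacts.

Lemma sqr_opp_sub (R : pzRingType) (x : R) : - x * - x - - x = x * x + x.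
Proof. by rewrite mulrNN opprK. Qed.

Theorem mainTheorem7 (R : pzRingType) (I : R -> Prop)
  (hI : two_sided_ideal I) :
  uniquely_weakly_I_clean I <->
  (quotient_semi_boolean I /\ idempotents_lift_uniquely_weakly I).
Proof.
split=> [clean | [semiB lift] x].
  split=> [x | x _]; last exact: clean.
  have [e [[ide [Ixe | Ixe]] _]] := clean x.
    by left; apply: (idem_congr_sqr_sub hI ide).
  right; rewrite -sqr_opp_sub; apply: (idem_congr_sqr_sub hI ide).
  by rewrite -opprD; apply: idealN.
have [/lift // | Ix] := semiB x.
have [|e [[ide near] uniq_e]] := lift (- x); first by rewrite sqr_opp_sub.
exists e; split; first by split; last exact/(weak_congr_opp hI).
by move=> f [idf /(weak_congr_opp hI) near_f]; apply: uniq_e.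
Qed.
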